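(* For all integers $n \ge 8$ and $d \ge 6$ with $d \le n-1$, \[ \binom{d-1}{2} + (d-1)\binom{n-d}{2}\,\mathcal{F}_{P_{n-d}} \le \binom{n}{2}\,\mathcal{F}_{P_n}. \]
   Context: $\mathcal{F}_{P_m}$ (for $m\ge1$) is the number of minimal forts of the path on $m$ vertices; equivalently $\mathcal{F}_{P_m}=a_m$ where $a_1=a_2=a_3=1$ and $a_m = a_{m-2}+a_{m-3}$ for $m \ge 4$. (A fort is a nonempty vertex set such that every vertex outside it has zero or at least two neighbors in it; minimal means no proper subset is a fort.) Binomial coefficients $\binom{j}{2}$ with $j<2$ are $0$. *)

From mathcomp Require Import all_boot.

(* Number of minimal forts of the path P_m (m >= 1), given by the recurrence
   a_1 = a_2 = a_3 = 1, a_m = a_{m-2} + a_{m-3} for m >= 4.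
   The value at m = 0 is an arbitrary convention (never used). *)
Fixpoint fortP (m : nat) : nat :=
  match m with
  | 0 => 0
  | 1 | 2 | 3 => 1
  | (k.+1 as m1).+1 => fortP k + (match k with 0 => 0 | k'.+1 => fortP k' end)
  end.

(* For m = n - d >= 2 the path count grows fast enough that
   (d - 1) F(m) <= F(n), the one exception being d = 6, m = 4, which is
   checked directly; for m = 1 the term with F(m) vanishes. Since the
   recurrence is linear, such a bound holds for all m as soon as it holds
   at three consecutive m; this reduces d = 6..9 to a finite check, and
   larger d follow from d - 2 and d - 3 through the recurrence. With F(m)
   absorbed into F(n), the statement reduces to
   C(d-1,2) + C(m,2) <= C(m+d,2). *)

From mathcomp Require Import all_boot.
From mathcomp Require Import zify.

Lemma bin2D m n : 'C(m + n, 2) = 'C(m, 2) + 'C(n, 2) + m * n.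
Proof.
elim: n => [|n IHn]; first by rewrite addn0 muln0 addn0 bin0n addn0.
by rewrite addnS !binS !bin1 IHn; lia.
Qed.

Lemma leq_bin2D m n : 'C(m, 2) + 'C(n, 2) <= 'C(m + n, 2).
Proof. by rewrite bin2D leq_addr. Qed.

Section LinearRecurrence.

Variable f : nat -> nat.
Hypothesis f_rec : forall k, f k.+3 = f k.+1 + f k.

Lemma mul_leq_shift_rec c d m0 :
    (forall i, i < 3 -> c * f (m0 + i) <= f (m0 + i + d)) ->
  forall m, m0 <= m -> c * f m <= f (m + d).
Proof.
move=> base; elim/ltn_ind=> m IHm le_m0m.
have [lt_m_m03 | le_m03_m] := ltnP m (m0 + 3).
  by rewrite -(subnKC le_m0m) base // ltn_subLR.
case: m le_m03_m IHm {le_m0m} => [|[|[|k]]] lek IHm; try lia.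
rewrite addSn addSn addSn f_rec f_rec mulnDr -addSn.
by apply: leq_add; apply: IHm; lia.
Qed.

End LinearRecurrence.

(* Also valid at k = 0, thanks to the convention fortP 0 = 0. *)
Lemma fortP_rec k : fortP k.+3 = fortP k.+1 + fortP k.
Proof. by case: k. Qed.

Lemma fortP_gt0 k : 0 < k -> 0 < fortP k.
Proof.
elim/ltn_ind: k => -[|[|[|[|k]]]] // IHk _.
by rewrite fortP_rec addn_gt0 IHk.
Qed.

Lemma fortP_growth_ge7 d m :
  7 <= d -> 2 <= m -> (d - 1) * fortP m <= fortP (m + d).
Proof.
elim/ltn_ind: d => d IHd le7d le2m.
have [lt_d10 | le10d] := ltnP d 10.
  have : [|| d == 7, d == 8 | d == 9] by lia.
  by case/or3P=> /eqP->;
    apply: (mul_leq_shift_rec fortP fortP_rec _ _ 2) => // -[|[|[|]]].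
have -> : m + d = (m + (d - 3)).+3 by lia.
rewrite fortP_rec -addnS.
have -> : (d - 3).+1 = d - 2 by lia.
have IH2 : (d - 2 - 1) * fortP m <= fortP (m + (d - 2)) by apply: IHd; lia.
have IH3 : (d - 3 - 1) * fortP m <= fortP (m + (d - 3)) by apply: IHd; lia.
apply: leq_trans (leq_add IH2 IH3).
by rewrite -mulnDl leq_mul2r; apply/orP; right; lia.
Qed.

Lemma fortP_growth6 m : 2 <= m -> m != 4 -> 5 * fortP m <= fortP (m + 6).
Proof.
move=> le2m m_neq4; have [lt_m5 | le5m] := ltnP m 5.
  have : (m == 2) || (m == 3) by lia.
  by case/orP=> /eqP->.
by apply: (mul_leq_shift_rec fortP fortP_rec _ _ 5) => // -[|[|[|]]].
Qed.

Lemma bin2_mul_leq d m x y : 0 < y ->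
    (d - 1) * 'C(m, 2) * x <= 'C(m, 2) * y ->
  'C(d - 1, 2) + (d - 1) * 'C(m, 2) * x <= 'C(m + d, 2) * y.
Proof.
move=> y_gt0 le_xy; apply: leq_trans (leq_add (leqnn _) le_xy) _.
apply: leq_trans (_ : ('C(d - 1, 2) + 'C(m, 2)) * y <= _).
  by rewrite mulnDl leq_add2r leq_pmulr.
rewrite leq_mul2r addnC; apply/orP; right.
by apply: leq_trans (leq_bin2D _ _); rewrite leq_add2l leq_bin2l ?leq_subr.
Qed.

Theorem mainTheorem19 (n d : nat) :
  8 <= n -> 6 <= d -> d <= n - 1 ->
  'C(d - 1, 2) + (d - 1) * 'C(n - d, 2) * fortP (n - d) <= 'C(n, 2) * fortP n.
Proof.
move=> le8n le6d le_d_n1.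
have -> : n = (n - d) + d by lia.
rewrite addnK; set m := n - d.
case: (boolP ((d == 6) && (m == 4))) => [/andP[/eqP-> /eqP->] // | not_exceptional].
apply: bin2_mul_leq; first by apply: fortP_gt0; lia.
have [m_le1 | m_gt1] := leqP m 1; first by rewrite bin_small ?muln0 ?mul0n //; lia.
rewrite mulnAC mulnC leq_mul2l; apply/orP; right.
have [le7d | lt_d7] := leqP 7 d; first exact: fortP_growth_ge7.
have -> : d = 6 by lia.
by apply: fortP_growth6; lia.
Qed.
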